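(* Let $\mathcal B$ be a symmetric bilinear form on a vector space $A$ and $s\in A$ a fixed vector. Define $\circ:A\otimes A\to A$ by $x\circ y=\mathcal B(x,y)s-\mathcal B(x,s)y$. Then $(A,\circ)$ is an anti-pre-Lie algebra. Moreover, $\mathcal B$ is invariant on $(A,\circ)$, i.e. $\mathcal B(x\circ y,z)=\mathcal B(y,[x,z])$ for all $x,y,z\in A$ where $[x,z]=x\circ z-z\circ x$, and hence $\mathcal B$ is a commutative 2-cocycle on the Lie algebra $(A,[-,-])$.
   Context: All vector spaces are finite-dimensional over a field $\mathbb F$ of characteristic $0$. An anti-pre-Lie algebra is a vector space $A$ with a bilinear operation $\circ$ such that, writing $[x,y]=x\circ y-y\circ x$, for all $x,y,z\in A$: (i) $x\circ(y\circ z)-y\circ(x\circ z)=[y,x]\circ z$, and (ii) $[x,y]\circ z+[y,z]\circ x+[z,x]\circ y=0$. A commutative 2-cocycle on a Lie algebra is a symmetric bilinear form $\mathcal B$ with $\mathcal B([x,y],z)+\mathcal B([y,z],x)+\mathcal B([z,x],y)=0$. *)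

From mathcomp Require Import all_boot all_algebra.
Set Implicit Arguments. Unset Strict Implicit. Unset Printing Implicit Defensive.
Import GRing.Theory.
Local Open Scope ring_scope.

Definition commut (V : zmodType) (op : V -> V -> V) (x y : V) : V :=
  op x y - op y x.

Definition bilin_form (F : fieldType) (V : vectType F) (B : V -> V -> F) :=
  (forall (a : F) x y z, B (a *: x + y) z = a * B x z + B y z) /\
  (forall (a : F) x y z, B x (a *: y + z) = a * B x y + B x z).

Definition bilinear_op (F : fieldType) (V : vectType F) (op : V -> V -> V) :=
  (forall (a : F) x y z, op (a *: x + y) z = a *: op x z + op y z) /\
  (forall (a : F) x y z, op x (a *: y + z) = a *: op x y + op x z).

Definition symm_form (F : fieldType) (V : vectType F) (B : V -> V -> F) :=
  forall x y, B x y = B y x.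

Definition anti_pre_Lie (F : fieldType) (V : vectType F) (op : V -> V -> V) :=
  bilinear_op op /\
  (forall x y z, op x (op y z) - op y (op x z) = op (commut op y x) z) /\
  (forall x y z, op (commut op x y) z + op (commut op y z) x
                 + op (commut op z x) y = 0).

Definition invariant_form (F : fieldType) (V : vectType F)
  (op : V -> V -> V) (B : V -> V -> F) :=
  forall x y z, B (op x y) z = B y (commut op x z).

Definition comm_2_cocycle (F : fieldType) (V : vectType F)
  (br : V -> V -> V) (B : V -> V -> F) :=
  symm_form B /\
  forall x y z, B (br x y) z + B (br y z) x + B (br z x) y = 0.

Definition Bop (F : fieldType) (V : vectType F) (B : V -> V -> F) (s : V)
  (x y : V) : V := B x y *: s - B x s *: y.

From mathcomp Require Import all_boot all_algebra.
Set Implicit Arguments. Unset Strict Implicit. Unset Printing Implicit Defensive.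
Import GRing.Theory.
Local Open Scope ring_scope.

(* By symmetry of [B], the commutator of [x o y = B(x,y) s - B(x,s) y] is
   [[x,y] = B(y,s) x - B(x,s) y], which is [B]-orthogonal to [s], so
   [[x,y] o z = B([x,y],z) s]. With [x o (y o z) = B(x,s)B(y,s) z - B(y,s)B(x,z) s]
   identity (i) and invariance become identities between the scalars [B(u,v)].
   Invariance alone gives [B([x,y],z) = B([x,z],y) - B([y,z],x)], which by
   antisymmetry of the bracket is the cocycle identity; identity (ii) is that
   identity multiplied by [s]. *)

Section ScalarLinear.
Variables (R : pzRingType) (V : lmodType R) (f : V -> R).
Hypothesis f_lin : forall a x y, f (a *: x + y) = a * f x + f y.

Lemma scalar_lin0 : f 0 = 0.
Proof.
have := f_lin 1 0 0; rewrite scale1r addr0 mul1r => f0_double.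
by apply/(addrI (f 0)); rewrite -f0_double addr0.
Qed.

Lemma scalar_linZ a x : f (a *: x) = a * f x.
Proof. by rewrite -[a *: x]addr0 f_lin scalar_lin0 addr0. Qed.

Lemma scalar_linB x y : f (x - y) = f x - f y.
Proof. by rewrite addrC -scaleN1r f_lin mulN1r addrC. Qed.

Lemma scalar_linN x : f (- x) = - f x.
Proof. by rewrite -sub0r scalar_linB scalar_lin0 sub0r. Qed.

End ScalarLinear.

Section BilinearForm.
Variables (F : fieldType) (V : vectType F) (B : V -> V -> F).
Hypothesis hB : bilin_form B.

Lemma bilinZl a x z : B (a *: x) z = a * B x z.
Proof. exact: (scalar_linZ (f := B^~ z) (fun a x y => proj1 hB a x y z)). Qed.

Lemma bilinBl x y z : B (x - y) z = B x z - B y z.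
Proof. exact: (scalar_linB (f := B^~ z) (fun a x y => proj1 hB a x y z)). Qed.

Lemma bilinNl x z : B (- x) z = - B x z.
Proof. exact: (scalar_linN (f := B^~ z) (fun a x y => proj1 hB a x y z)). Qed.

Lemma bilinZr a x y : B x (a *: y) = a * B x y.
Proof. exact: (scalar_linZ (f := B x) (proj2 hB ^~ x)). Qed.

Lemma bilinBr x y z : B x (y - z) = B x y - B x z.
Proof. exact: (scalar_linB (f := B x) (proj2 hB ^~ x)). Qed.

End BilinearForm.

Lemma commutN (W : zmodType) (op : W -> W -> W) x y :
  commut op y x = - commut op x y.
Proof. by rewrite /commut opprB. Qed.

Lemma invariant_form_comm_2_cocycle (F : fieldType) (V : vectType F)
    (op : V -> V -> V) (B : V -> V -> F) :
  bilin_form B -> symm_form B -> invariant_form op B ->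
  comm_2_cocycle (commut op) B.
Proof.
move=> hB hS hinv; split=> // x y z.
have B_commut_rot u v w :
    B (commut op u v) w = - B (commut op w u) v - B (commut op v w) u.
  by rewrite bilinBl // !hinv (hS v) commutN bilinNl // (hS u).
by rewrite B_commut_rot subrK addNr.
Qed.

Section ProductFromForm.
Variables (F : fieldType) (V : vectType F) (B : V -> V -> F) (s : V).
Hypotheses (hB : bilin_form B) (hS : symm_form B).

Local Notation op := (Bop B s).
Local Notation br := (commut op).

Lemma Bop_linearl a x y z : op (a *: x + y) z = a *: op x z + op y z.
Proof.
rewrite /Bop !(proj1 hB) !scalerDl opprD addrACA.
by rewrite scalerBr !scalerA.
Qed.

Lemma Bop_linearr a x y z : op x (a *: y + z) = a *: op x y + op x z.
Proof.
rewrite /Bop (proj2 hB) scalerDl scalerDr opprD addrACA.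
by rewrite scalerBr !scalerA (mulrC (B x s)).
Qed.

Lemma commut_BopE x y : br x y = B y s *: x - B x s *: y.
Proof. by rewrite /commut /Bop (hS y x) opprB addrC addrA subrK. Qed.

Lemma B_commut_BopE x y z : B (br x y) z = B y s * B x z - B x s * B y z.
Proof. by rewrite commut_BopE bilinBl // !bilinZl. Qed.

Lemma B_commut_Bop_s x y : B (br x y) s = 0.
Proof. by rewrite B_commut_BopE mulrC subrr. Qed.

Lemma Bop_commutl x y z : op (br x y) z = B (br x y) z *: s.
Proof. by rewrite /Bop B_commut_Bop_s scale0r subr0. Qed.

Lemma Bop_BopE x y z :
  op x (op y z) = (B x s * B y s) *: z - (B y s * B x z) *: s.
Proof.
rewrite {1}/Bop bilinBr // !bilinZr // scalerBl (mulrC (B y z)).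
by rewrite /Bop scalerBr !scalerA opprB addrC addrA subrK.
Qed.

Lemma B_BopE x y z : B (op x y) z = B x y * B s z - B x s * B y z.
Proof. by rewrite /Bop bilinBl // !bilinZl. Qed.

Lemma Bop_invariant : invariant_form op B.
Proof.
move=> x y z; rewrite B_BopE [RHS]hS B_commut_BopE.
by rewrite (hS s z) (hS z y) mulrC.
Qed.

Lemma Bop_comm_2_cocycle : comm_2_cocycle br B.
Proof. exact: invariant_form_comm_2_cocycle hB hS Bop_invariant. Qed.

Lemma Bop_anti_pre_Lie : anti_pre_Lie op.
Proof.
split; first by split; [exact: Bop_linearl | exact: Bop_linearr].
split=> x y z.
  rewrite !Bop_BopE Bop_commutl B_commut_BopE (mulrC (B y s) (B x s)).
  by rewrite opprB addrC addrA subrK -scalerBl.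
by rewrite !Bop_commutl -!scalerDl (proj2 Bop_comm_2_cocycle) scale0r.
Qed.

End ProductFromForm.

Theorem proposition2p27 (F : fieldType) (V : vectType F)
  (B : V -> V -> F) (s : V) :
  (forall p : nat, p \notin GRing.pchar F) ->
  bilin_form B -> symm_form B ->
  anti_pre_Lie (Bop B s) /\ invariant_form (Bop B s) B /\
  comm_2_cocycle (commut (Bop B s)) B.
Proof.
move=> _ hB hS; split; first exact: Bop_anti_pre_Lie.
by split; [exact: Bop_invariant | exact: Bop_comm_2_cocycle].
Qed.
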